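(* For every point $y\in GZ(\lambda)$ there exists a unique enhanced Gelfand--Zetlin pattern $P$ with top row $\lambda$ such that $y\in C_P$.
   Context: Let $\lambda=(\lambda_1\ge\dots\ge\lambda_n)$ be a partition. Coordinates $y_{ij}$ ($i,j\ge1$, $i+j\le n$) on $\mathbb{R}^{n(n-1)/2}$, with $y_{0j}=\lambda_{n+1-j}$; $GZ(\lambda)$ is defined by $y_{i-1,j}\le y_{ij}\le y_{i-1,j+1}$. A GZ pattern with top row $\lambda$ is an integer array $a_{ij}$, $0\le i\le n-1$, $1\le j\le n-i$, with $a_{0j}=\lambda_{n+1-j}$ and $a_{i-1,j}\le a_{ij}\le a_{i-1,j+1}$. An enhanced GZ pattern is such an array with encircled entries and edges (each joining $a_{ij}$, $i\ge1$, with $a_{i-1,j}$ or $a_{i-1,j+1}$) such that: (1) row $0$ entries are encircled; (2) joined entries are equal, the lower one encircled; (3) for $i\ge1$: both $a_{ij},a_{i,j+1}$ are joined to $a_{i-1,j+1}$ iff both are joined to $a_{i+1,j}$; (4) if $a_{0j}=a_{0,j+1}$ then $a_{1j}$ is encircled and joined to both; (5) if $a_{i-1,j}<a_{i-1,j+1}$ and $a_{ij}=a_{i-1,j}$, then $a_{ij}$ is encircled and joined to $a_{i-1,j}$; (6) if $a_{i-1,j}<a_{i-1,j+1}$, $a_{ij}=a_{i-1,j+1}$, $a_{ij}$ encircled, then joined to $a_{i-1,j+1}$; (7) if $a_{i-1,j}=a_{i-1,j+1}=a_{ij}$ and the two upper entries are connected by a path of edges, then $a_{ij}$ is encircled and joined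 to both; (8) if $a_{i-1,j}=a_{i-1,j+1}=a_{ij}$ and $a_{ij}$ is encircled, it is joined to at least one of them. Cell $C_P$: for each $i\ge1$ impose: if $a_{ij}$ is joined to $a_{i-1,j}$ (resp. $a_{i-1,j+1}$), then $y_{ij}=y_{i-1,j}$ (resp. $y_{ij}=y_{i-1,j+1}$); if no edge goes up from $a_{ij}$ and it is encircled, $y_{ij}=a_{ij}$; if no edge goes up and it is not encircled, impose $a_{ij}-1<y_{ij}$ if $a_{ij}-a_{i-1,j}\ge2$, else $y_{i-1,j}<y_{ij}$, and $y_{ij}<y_{i-1,j+1}$ if $a_{i-1,j+1}=a_{ij}$, else $y_{ij}<a_{ij}$. Let $\widehat{C_P}$ be the set so defined, $L$ its affine span, and $C_P=\widehat{C_P}\cap(GZ(\lambda)\cap L)^0$, where $(\cdot)^0$ is the relative interior in $L$. *)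

From Stdlib Require Import Relations List.
From mathcomp Require Import all_boot all_order all_algebra.
From mathcomp Require Import reals.
Set Implicit Arguments. Unset Strict Implicit. Unset Printing Implicit Defensive.
Import Order.TTheory GRing.Theory Num.Theory.
Local Open Scope ring_scope.

(* Arrays indexed by (i, j) are represented by total functions nat -> nat -> _;
   only the values at the indices of the array are meaningful. *)

Definition entry (n i j : nat) : bool := (i < n)%N && (0 < j)%N && (j <= n - i)%N.

Definition coord (n i j : nat) : bool := (0 < i)%N && (0 < j)%N && (i + j <= n)%N.

Definition is_partition (n : nat) (lam : nat -> nat) : Prop :=
  forall k, (1 <= k)%N -> (k < n)%N -> (lam k.+1 <= lam k)%N.

Definition Yext (R : realType) (n : nat) (lam : nat -> nat) (y : nat -> nat -> R)
  (i j : nat) : R := if i == 0%N then (lam (n.+1 - j)%N)%:R else y i j.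

Definition inGZ (R : realType) (n : nat) (lam : nat -> nat) (y : nat -> nat -> R) : Prop :=
  forall i j, coord n i j ->
    Yext n lam y i.-1 j <= Yext n lam y i j /\ Yext n lam y i j <= Yext n lam y i.-1 j.+1.

(* pa i j = a_ij; circ i j : a_ij is encircled;
   eL i j : a_ij is joined to a_{i-1,j}; eR i j : a_ij is joined to a_{i-1,j+1}. *)
Record epattern := EPattern {
  pa : nat -> nat -> int;
  circ : nat -> nat -> bool;
  eL : nat -> nat -> bool;
  eR : nat -> nat -> bool }.

Definition edge_adj (n : nat) (P : epattern) (u v : nat * nat) : Prop :=
  let e := fun (p q : nat * nat) =>
    entry n p.1 p.2 /\ (0 < p.1)%N /\
    ((eL P p.1 p.2 /\ q = (p.1.-1, p.2)) \/ (eR P p.1 p.2 /\ q = (p.1.-1, p.2.+1))) in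
  e u v \/ e v u.

Definition edge_connected (n : nat) (P : epattern) : relation (nat * nat) :=
  clos_refl_trans (nat * nat) (edge_adj n P).

Definition GZpattern (n : nat) (lam : nat -> nat) (a : nat -> nat -> int) : Prop :=
  (forall j, entry n 0 j -> a 0%N j = (lam (n.+1 - j)%N)%:Z) /\
  (forall i j, entry n i j -> (0 < i)%N ->
     a i.-1 j <= a i j /\ a i j <= a i.-1 j.+1).

Definition enhanced (n : nat) (lam : nat -> nat) (P : epattern) : Prop :=
  let a := pa P in
  GZpattern n lam a /\
  (* (1) *)
  (forall j, entry n 0 j -> circ P 0%N j) /\
  (* (2) *)
  (forall i j, entry n i j -> (0 < i)%N ->
     (eL P i j -> a i j = a i.-1 j /\ circ P i j) /\
     (eR P i j -> a i j = a i.-1 j.+1 /\ circ P i j)) /\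
  (* (3) *)
  (forall i j, (1 <= i)%N -> (1 <= j)%N -> entry n i j.+1 ->
     (eR P i j && eL P i j.+1) = (eL P i.+1 j && eR P i.+1 j)) /\
  (* (4) *)
  (forall j, entry n 0 j -> entry n 0 j.+1 -> a 0%N j = a 0%N j.+1 ->
     [/\ circ P 1%N j, eL P 1%N j & eR P 1%N j]) /\
  (* (5) *)
  (forall i j, entry n i j -> (0 < i)%N ->
     a i.-1 j < a i.-1 j.+1 -> a i j = a i.-1 j -> circ P i j /\ eL P i j) /\
  (* (6) *)
  (forall i j, entry n i j -> (0 < i)%N ->
     a i.-1 j < a i.-1 j.+1 -> a i j = a i.-1 j.+1 -> circ P i j -> eR P i j) /\
  (* (7) *)
  (forall i j, entry n i j -> (0 < i)%N ->
     a i.-1 j = a i.-1 j.+1 -> a i j = a i.-1 j ->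
     edge_connected n P (i.-1, j) (i.-1, j.+1) ->
     [/\ circ P i j, eL P i j & eR P i j]) /\
  (* (8) *)
  (forall i j, entry n i j -> (0 < i)%N ->
     a i.-1 j = a i.-1 j.+1 -> a i j = a i.-1 j -> circ P i j ->
     eL P i j || eR P i j).

Definition same_pattern (n : nat) (P Q : epattern) : Prop :=
  forall i j, entry n i j ->
    [/\ pa P i j = pa Q i j, circ P i j = circ Q i j,
        ((0 < i)%N -> eL P i j = eL Q i j) & ((0 < i)%N -> eR P i j = eR Q i j)].

Definition Chat (R : realType) (n : nat) (lam : nat -> nat) (P : epattern)
  (y : nat -> nat -> R) : Prop :=
  let Y := Yext n lam y in
  let a := pa P in
  forall i j, coord n i j ->
    (eL P i j -> Y i j = Y i.-1 j) /\
    (eR P i j -> Y i j = Y i.-1 j.+1) /\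
    (~~ eL P i j -> ~~ eR P i j -> circ P i j -> Y i j = (a i j)%:~R) /\
    (~~ eL P i j -> ~~ eR P i j -> ~~ circ P i j ->
       (if (2%:Z <= a i j - a i.-1 j) then (a i j - 1)%:~R < Y i j else Y i.-1 j < Y i j) /\
       (if a i.-1 j.+1 == a i j then Y i j < Y i.-1 j.+1 else Y i j < (a i j)%:~R)).

Definition affine_span (R : realType) (n : nat) (S : (nat -> nat -> R) -> Prop)
  (z : nat -> nat -> R) : Prop :=
  exists s : seq (R * (nat -> nat -> R)),
    (forall p, Stdlib.Lists.List.In p s -> S p.2) /\
    \sum_(p <- s) p.1 = 1 /\
    (forall i j, coord n i j -> z i j = \sum_(p <- s) p.1 * p.2 i j).

(* relative interior of T inside the affine subspace L (Euclidean topology;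
   the sup-norm balls are used, which give the same topology) *)
Definition rel_interior (R : realType) (n : nat) (L T : (nat -> nat -> R) -> Prop)
  (x : nat -> nat -> R) : Prop :=
  L x /\ T x /\
  exists e : R, 0 < e /\
    forall z, L z -> (forall i j, coord n i j -> `|z i j - x i j| < e) -> T z.

Definition inCell (R : realType) (n : nat) (lam : nat -> nat) (P : epattern)
  (y : nat -> nat -> R) : Prop :=
  let L := affine_span n (Chat n lam P) in
  Chat n lam P y /\
  rel_interior n L (fun z => inGZ n lam z /\ L z) y.

From Pilot Require Import Defs.
From mathcomp Require Import all_boot all_order all_algebra reals boolp.
From mathcomp Require Import zify lra.
From Stdlib Require Import Relations.
Import Order.TTheory GRing.Theory Num.Theory.
Set Implicit Arguments. Unset Strict Implicit. Unset Printing Implicit Defensive.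
Local Open Scope ring_scope.

(* Existence: read the pattern off y row by row. An entry is joined to a parent
   exactly when y takes the same value there, it is encircled when it is joined
   or y equals its value, and its value is the least integer compatible with the
   strict inequalities of the cell ([next_entry]). The point y is interior to
   GZ(lam) within the affine span of the cell because every GZ inequality that
   is an equality at y is an edge, hence an equality on the whole cell.
   Uniqueness: if y lies in C_Q, moving y by a small d on an edge-connected
   component of Q on which y < a keeps the point in \hat{C_Q} and near y, hence
   in GZ(lam). So two equal neighbouring values of y that are not edge-connected
   both sit at their integer values. With conditions (2)-(8) this determines the
   edges, circles and values of Q row by row. *)

(* [vector] also exports a [coord]. *)
Local Notation coord := Defs.coord.
Arguments Yext : simpl never.

Definition ypos (n i j : nat) : bool := coord n i j || (i == 0)%N.

Section Indices.
Variables n i j : nat.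

Lemma coord_entry : coord n i j -> entry n i j.
Proof. by rewrite /coord /entry; lia. Qed.

Lemma entry_coord : entry n i j -> (0 < i)%N -> coord n i j.
Proof. by rewrite /coord /entry; lia. Qed.

Lemma coord_entryL : coord n i j -> entry n i.-1 j.
Proof. by rewrite /coord /entry; lia. Qed.

Lemma coord_entryR : coord n i j -> entry n i.-1 j.+1.
Proof. by rewrite /coord /entry; lia. Qed.

Lemma coord_pos : coord n i j -> (0 < i)%N.
Proof. by rewrite /coord; lia. Qed.

Lemma coord_ypos : coord n i j -> ypos n i j.
Proof. by rewrite /ypos => ->. Qed.

Lemma coord_yposL : coord n i j -> ypos n i.-1 j.
Proof. by rewrite /ypos /coord; lia. Qed.

Lemma coord_yposR : coord n i j -> ypos n i.-1 j.+1.
Proof. by rewrite /ypos /coord; lia. Qed.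

End Indices.

Section Edges.
Variables (n : nat) (P : epattern).

Lemma edge_adj_sym u v : edge_adj n P u v -> edge_adj n P v u.
Proof. by case; [right|left]. Qed.

Lemma edge_adjL i j : entry n i j -> (0 < i)%N -> eL P i j -> edge_adj n P (i, j) (i.-1, j).
Proof. by left; split=> //; split=> //; left. Qed.

Lemma edge_adjR i j : entry n i j -> (0 < i)%N -> eR P i j -> edge_adj n P (i, j) (i.-1, j.+1).
Proof. by left; split=> //; split=> //; right. Qed.

Lemma edge_connected_sym u v : edge_connected n P u v -> edge_connected n P v u.
Proof.
elim=> [{}u {}v /edge_adj_sym uv|{}u|u' v' w' _ IH1 _ IH2]; last exact: rt_trans IH2 IH1.
- exact: rt_step.
- exact: rt_refl.
Qed.

Lemma edge_connected_eq (T : Type) (f : nat -> nat -> T) :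
  (forall i j, entry n i j -> (0 < i)%N ->
     (eL P i j -> f i j = f i.-1 j) /\ (eR P i j -> f i j = f i.-1 j.+1)) ->
  forall u v, edge_connected n P u v -> f u.1 u.2 = f v.1 v.2.
Proof.
move=> Hf u v; elim=> [{}u {}v uv|//|u' v' w' _ -> _ //].
case: uv => -[ent [pos [[hL ->]|[hR ->]]]].
- exact: (Hf _ _ ent pos).1 hL.
- exact: (Hf _ _ ent pos).2 hR.
- exact: esym ((Hf _ _ ent pos).1 hL).
- exact: esym ((Hf _ _ ent pos).2 hR).
Qed.

End Edges.

Lemma Yext_top (R : realType) n lam (z : nat -> nat -> R) j :
  Yext n lam z 0 j = (lam (n.+1 - j)%N)%:R.
Proof. by []. Qed.

Lemma Yext_coord (R : realType) n lam (z : nat -> nat -> R) i j :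
  coord n i j -> Yext n lam z i j = z i j.
Proof. by case: i => [|i] // /coord_pos. Qed.

Section Neighbourhoods.
Variables (R : realType) (n : nat) (lam : nat -> nat) (y : nat -> nat -> R).
Local Notation Y := (Yext n lam y).

Definition near (T : (nat -> nat -> R) -> Prop) : Prop :=
  exists2 e : R, 0 < e &
    forall z, (forall i j, coord n i j -> `|z i j - y i j| < e) -> T z.

Lemma nearT (T : (nat -> nat -> R) -> Prop) : (forall z, T z) -> near T.
Proof. by move=> HT; exists 1. Qed.

Lemma near_impl (T1 T2 : (nat -> nat -> R) -> Prop) :
  (forall z, T1 z -> T2 z) -> near T1 -> near T2.
Proof. by move=> H12 [e e_gt0 He]; exists e => // z /He /H12. Qed.

Lemma near_and (T1 T2 : (nat -> nat -> R) -> Prop) :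
  near T1 -> near T2 -> near (fun z => T1 z /\ T2 z).
Proof.
move=> [e1 e1_gt0 H1] [e2 e2_gt0 H2].
exists (Num.min e1 e2); first by rewrite lt_min e1_gt0.
move=> z hz; split; [apply: H1 | apply: H2] => i j /hz; rewrite lt_min => /andP[] //.
Qed.

Lemma near_forall_ltn (T : nat -> (nat -> nat -> R) -> Prop) N :
  (forall k, (k < N)%N -> near (T k)) -> near (fun z => forall k, (k < N)%N -> T k z).
Proof.
elim: N => [|N IH] HT; first by apply: nearT.
apply: near_impl (near_and (IH (fun k hk => HT k (leqW hk))) (HT N (ltnSn N))).
by move=> z [Hlt HN] k; rewrite ltnS leq_eqVlt => /predU1P[->|/Hlt].
Qed.

Lemma near_forall_coord (T : nat -> nat -> (nat -> nat -> R) -> Prop) :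
  (forall i j, coord n i j -> near (T i j)) ->
  near (fun z => forall i j, coord n i j -> T i j z).
Proof.
move=> HT.
have : near (fun z => forall i, (i < n.+1)%N -> forall j, (j < n.+1)%N ->
                       coord n i j -> T i j z).
  apply: near_forall_ltn => i _; apply: near_forall_ltn => j _.
  have [hc|hc] := boolP (coord n i j); last by apply: nearT => z hc'; case/negP: hc.
  by apply: near_impl (HT i j hc) => z.
by apply: near_impl => z Hz i j hc; apply: Hz => //; move: hc; rewrite /coord; lia.
Qed.

Lemma Yext_near (z : nat -> nat -> R) e i j :
  (forall i j, coord n i j -> `|z i j - y i j| < e) -> 0 < e -> ypos n i j ->
  `|Yext n lam z i j - Y i j| < e.
Proof.
move=> hz e_gt0 /orP[hc|/eqP->]; last by rewrite !Yext_top subrr normr0.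
by rewrite !Yext_coord //; apply: hz.
Qed.

Lemma near_Yext_lt i1 j1 i2 j2 : ypos n i1 j1 -> ypos n i2 j2 -> Y i1 j1 < Y i2 j2 ->
  near (fun z => Yext n lam z i1 j1 < Yext n lam z i2 j2).
Proof.
move=> h1 h2 hlt; exists ((Y i2 j2 - Y i1 j1) / 2) => [|z hz]; first lra.
have e_gt0 : 0 < (Y i2 j2 - Y i1 j1) / 2 by lra.
move: (Yext_near hz e_gt0 h1) (Yext_near hz e_gt0 h2).
rewrite !ltr_distl => /andP[_ ?] /andP[? _]; lra.
Qed.

Lemma near_Yext_ltr i j c : ypos n i j -> Y i j < c -> near (fun z => Yext n lam z i j < c).
Proof.
move=> hp hlt; exists ((c - Y i j) / 2) => [|z hz]; first lra.
have e_gt0 : 0 < (c - Y i j) / 2 by lra.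
by move: (Yext_near hz e_gt0 hp); rewrite ltr_distl => /andP[_ ?]; lra.
Qed.

Lemma near_ltr_Yext i j c : ypos n i j -> c < Y i j -> near (fun z => c < Yext n lam z i j).
Proof.
move=> hp hlt; exists ((Y i j - c) / 2) => [|z hz]; first lra.
have e_gt0 : 0 < (Y i j - c) / 2 by lra.
by move: (Yext_near hz e_gt0 hp); rewrite ltr_distl => /andP[? _]; lra.
Qed.

Lemma affine_span_self (S : (nat -> nat -> R) -> Prop) w : S w -> affine_span n S w.
Proof.
move=> Sw; exists [:: (1, w)]; split; first by move=> p [<-|[]].
by split=> [|i j _]; rewrite big_seq1 //= mul1r.
Qed.

Lemma affine_span_Yext (S : (nat -> nat -> R) -> Prop) z : affine_span n S z ->
  exists s : seq (R * (nat -> nat -> R)), (forall p, List.In p s -> S p.2) /\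
    forall i j, ypos n i j -> Yext n lam z i j = \sum_(p <- s) p.1 * Yext n lam p.2 i j.
Proof.
case=> s [sS [sum1 zE]]; exists s; split=> // i j /orP[hc|/eqP->].
  by rewrite Yext_coord // zE //; apply: eq_bigr => p _; rewrite Yext_coord.
by rewrite Yext_top -mulr_suml sum1 mul1r.
Qed.

Lemma affine_span_Yext_eq (S : (nat -> nat -> R) -> Prop) z i1 j1 i2 j2 :
  affine_span n S z -> ypos n i1 j1 -> ypos n i2 j2 ->
  (forall w, S w -> Yext n lam w i1 j1 = Yext n lam w i2 j2) ->
  Yext n lam z i1 j1 = Yext n lam z i2 j2.
Proof.
move=> /affine_span_Yext[s [sS zE]] h1 h2 HS; rewrite (zE _ _ h1) (zE _ _ h2).
elim: s sS {zE} => [|p s IH] sS; first by rewrite !big_nil.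
rewrite !big_cons HS ?IH //; first by move=> q hq; apply: sS; right.
by apply: sS; left.
Qed.

Lemma near_affine_span_le (S : (nat -> nat -> R) -> Prop) i1 j1 i2 j2 :
  ypos n i1 j1 -> ypos n i2 j2 -> Y i1 j1 <= Y i2 j2 ->
  (Y i1 j1 = Y i2 j2 -> forall w, S w -> Yext n lam w i1 j1 = Yext n lam w i2 j2) ->
  near (fun z => affine_span n S z -> Yext n lam z i1 j1 <= Yext n lam z i2 j2).
Proof.
move=> h1 h2; rewrite le_eqVlt => /predU1P[eqY HS|ltY].
  by apply: nearT => z zS; rewrite (affine_span_Yext_eq zS h1 h2 (HS eqY)).
by move=> _; apply: near_impl (near_Yext_lt h1 h2 ltY) => z /ltW.
Qed.

End Neighbourhoods.

Section NextEntry.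
Variable R : realType.

(* The value of an entry with parent values [al <= ar], parent coordinates
   [yl <= yr] and own coordinate [yv]: a joined parent's value, and otherwise
   the least integer compatible with the strict inequalities of the cell,
   which by condition (5) cannot be [al] when [al < ar]. *)
Definition next_entry (al ar : int) (yl yr yv : R) : int :=
  if yv == yl then al else if yv == yr then ar
  else if yv <= al%:~R then (if al < ar then al + 1 else ar) else Num.ceil yv.

Variables (al ar : int) (yl yr yv : R).

Lemma next_entry_eqL : yv = yl -> next_entry al ar yl yr yv = al.
Proof. by rewrite /next_entry => ->; rewrite eqxx. Qed.

Lemma next_entry_eqR : yv <> yl -> yv = yr -> next_entry al ar yl yr yv = ar.
Proof. by rewrite /next_entry => /eqP/negPf -> ->; rewrite eqxx. Qed.

Lemma next_entry_free : yl < yv -> yv < yr ->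
  let a := next_entry al ar yl yr yv in (a%:~R : R) != yv ->
  (if 2%:Z <= a - al then (a - 1)%:~R < yv else yl < yv) /\
  (if ar == a then yv < yr else yv < a%:~R).
Proof.
move=> hl hr /=; rewrite /next_entry.
rewrite (gt_eqF hl) (lt_eqF hr).
have [lo|hi] := leP yv al%:~R.
  case: ifP => ltlr _; last by rewrite eqxx; split=> //; case: ifP => //; lia.
  split; first by case: ifP => //; lia.
  by case: ifP => // _; rewrite intrD; lra.
move=> ne_ceil; split.
- by case: ifP => // _; exact: ceilB1_lt.
- by case: ifP => // _; rewrite lt_neqAle eq_sym ne_ceil ceil_ge.
Qed.

Lemma next_entry_eq_left : yv <> yl -> next_entry al ar yl yr yv = al -> al = ar.
Proof.
move=> /eqP/negPf neL; rewrite /next_entry neL.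
have [_|_] := eqVneq yv yr; first by [].
have [_|hi] := leP yv al%:~R; first by case: ifP; lia.
by move=> ceil_eq; move: hi; rewrite -ceil_gt_int ceil_eq ltxx.
Qed.

Hypothesis al_le_ar : al <= ar.

Lemma next_entry_bounds : yl <= al%:~R -> yr <= ar%:~R -> yl <= yv -> yv <= yr ->
  [/\ al <= next_entry al ar yl yr yv, next_entry al ar yl yr yv <= ar &
      yv <= (next_entry al ar yl yr yv)%:~R].
Proof.
move=> hl hr h1 h2; rewrite /next_entry.
have alr : (al%:~R : R) <= ar%:~R by rewrite ler_int.
have [eL|_] := eqVneq yv yl; first by split; rewrite // eL.
have [eR|_] := eqVneq yv yr; first by split; rewrite // eR.
have [lo|hi] := leP yv al%:~R.
  by case: ifP => ltlr; split=> //; try lia; rewrite ?intrD; lra.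
split; last exact: ceil_ge.
- by rewrite ltW // ceil_gt_int.
- by rewrite ceil_le_int; lra.
Qed.

End NextEntry.

Section Construction.
Variables (R : realType) (n : nat) (lam : nat -> nat).
Hypothesis lam_partition : is_partition n lam.
Variable y : nat -> nat -> R.
Hypothesis y_GZ : inGZ n lam y.
Local Notation Y := (Yext n lam y).

Fixpoint gz_val i j : int :=
  if i is i'.+1 then next_entry (gz_val i' j) (gz_val i' j.+1) (Y i' j) (Y i' j.+1) (Y i j)
  else (lam (n.+1 - j)%N)%:Z.

Definition gz_eL i j : bool := if i is i'.+1 then Y i j == Y i' j else false.
Definition gz_eR i j : bool := if i is i'.+1 then Y i j == Y i' j.+1 else false.
Definition gz_circ i j : bool :=
  (i == 0)%N || [|| gz_eL i j, gz_eR i j | (gz_val i j)%:~R == Y i j].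

Definition gz_pattern := EPattern gz_val gz_circ gz_eL gz_eR.

Lemma gz_val_bounds i j : coord n i j ->
  Y i.-1 j <= (gz_val i.-1 j)%:~R -> Y i.-1 j.+1 <= (gz_val i.-1 j.+1)%:~R ->
  gz_val i.-1 j <= gz_val i.-1 j.+1 ->
  [/\ gz_val i.-1 j <= gz_val i j, gz_val i j <= gz_val i.-1 j.+1 &
      Y i j <= (gz_val i j)%:~R].
Proof.
case: i => [|i] hc hl hr hlr; first by move: hc; rewrite /coord; lia.
by have [g1 g2] := y_GZ hc; apply: next_entry_bounds.
Qed.

Lemma gz_val_inv i : forall j, entry n i j ->
  Y i j <= (gz_val i j)%:~R /\ (entry n i j.+1 -> gz_val i j <= gz_val i j.+1).
Proof.
elim: i => [|i IH] j hj.
  split=> // hj1; rewrite lez_nat.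
  have -> : (n.+1 - j = (n - j).+1)%N by move: hj; rewrite /entry; lia.
  have -> : (n.+1 - j.+1 = n - j)%N by [].
  by apply: lam_partition; move: hj hj1; rewrite /entry; lia.
have bounds k : entry n i.+1 k -> [/\ gz_val i k <= gz_val i.+1 k,
    gz_val i.+1 k <= gz_val i k.+1 & Y i.+1 k <= (gz_val i.+1 k)%:~R].
  move=> hk; have hc := entry_coord hk (ltn0Sn i).
  have [hl mono] := IH k (coord_entryL hc); have [hr _] := IH k.+1 (coord_entryR hc).
  exact: gz_val_bounds hc hl hr (mono (coord_entryR hc)).
have [_ le_r le_Y] := bounds j hj; split=> // hj1.
by have [le_l _ _] := bounds j.+1 hj1; apply: le_trans le_r le_l.
Qed.

Lemma gz_val_interlace i j : coord n i j ->
  gz_val i.-1 j <= gz_val i j /\ gz_val i j <= gz_val i.-1 j.+1.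
Proof.
move=> hc; have [hl mono] := gz_val_inv (coord_entryL hc).
have [hr _] := gz_val_inv (coord_entryR hc).
by have [] := gz_val_bounds hc hl hr (mono (coord_entryR hc)).
Qed.

Lemma gz_val_row_tie k : forall m, entry n k m -> entry n k m.+1 ->
  Y k m = Y k m.+1 -> gz_val k m = gz_val k m.+1.
Proof.
elim: k => [|k IH] m h1 h2 eqY.
  by move/eqP: eqY; rewrite !Yext_top eqr_nat /= => /eqP ->.
have c1 := entry_coord h1 (ltn0Sn k); have c2 := entry_coord h2 (ltn0Sn k).
have [g1 g2] := y_GZ c1; have [g3 g4] := y_GZ c2.
have eqR : Y k.+1 m.+1 = Y k m.+1 by lra.
rewrite /= (next_entry_eqL _ _ _ eqR).
have [eqL|neL] := eqVneq (Y k.+1 m) (Y k m).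
  by rewrite next_entry_eqL //; apply: IH (coord_entryL c1) (coord_entryR c1) _; lra.
by rewrite next_entry_eqR //; [exact/eqP | lra].
Qed.

Lemma gz_val_eqR i j : coord n i j -> Y i j = Y i.-1 j.+1 -> gz_val i j = gz_val i.-1 j.+1.
Proof.
case: i => [|i] hc eqR; first by move: hc; rewrite /coord; lia.
have [eqL|neL] := eqVneq (Y i.+1 j) (Y i j); last by rewrite /= next_entry_eqR //; exact/eqP.
rewrite /= next_entry_eqL //.
by apply: gz_val_row_tie (coord_entryL hc) (coord_entryR hc) _; rewrite -eqL.
Qed.

Lemma Y_lt_gz_valR i j : coord n i j -> ~~ gz_eR i j -> Y i j < (gz_val i.-1 j.+1)%:~R.
Proof.
case: i => [|i] hc nR; first by move: hc; rewrite /coord; lia.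
have [_ g2] := y_GZ hc; have [hr _] := gz_val_inv (coord_entryR hc).
by apply: lt_le_trans hr; rewrite lt_neqAle nR.
Qed.

Lemma gz_joined i j : entry n i j -> (0 < i)%N ->
  (gz_eL i j -> gz_val i j = gz_val i.-1 j /\ gz_circ i j) /\
  (gz_eR i j -> gz_val i j = gz_val i.-1 j.+1 /\ gz_circ i j).
Proof.
case: i => [|i] // hij _; have hc := entry_coord hij (ltn0Sn i).
rewrite /gz_circ /=; split=> /[dup] /eqP eY ->; rewrite ?orbT; split=> //.
  exact: next_entry_eqL.
exact: gz_val_eqR hc eY.
Qed.

Lemma gz_square i j : (1 <= i)%N -> (1 <= j)%N -> entry n i j.+1 ->
  (gz_eR i j && gz_eL i j.+1) = (gz_eL i.+1 j && gz_eR i.+1 j).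
Proof.
case: i => [|i] // _ j_pos hij.
have c1 : coord n i.+1 j by move: hij; rewrite /entry /coord; lia.
have c2 : coord n i.+1 j.+1 by move: hij; rewrite /entry /coord; lia.
have c3 : coord n i.+2 j by move: hij; rewrite /entry /coord; lia.
have [g1 g2] := y_GZ c1; have [g3 g4] := y_GZ c2; have [g5 g6] := y_GZ c3.
by rewrite /=; apply/idP/idP => /andP[/eqP e1 /eqP e2]; apply/andP; split; apply/eqP; lra.
Qed.

Lemma gz_top_tie j : entry n 0 j -> entry n 0 j.+1 -> gz_val 0 j = gz_val 0 j.+1 ->
  [/\ gz_circ 1 j, gz_eL 1 j & gz_eR 1 j].
Proof.
move=> hj hj1 [eq_lam].
have hc : coord n 1 j by move: hj hj1; rewrite /entry /coord; lia.
have [g1 g2] := y_GZ hc.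
have eY : Y 0 j = Y 0 j.+1 by rewrite !Yext_top eq_lam.
have eY1 : Y 1 j = Y 0 j by rewrite /= in g1 g2; lra.
by rewrite /gz_circ /gz_eL /gz_eR /= eY1 eqxx eY eqxx.
Qed.

Lemma gz_eq_left i j : entry n i j -> (0 < i)%N -> gz_val i.-1 j < gz_val i.-1 j.+1 ->
  gz_val i j = gz_val i.-1 j -> gz_circ i j /\ gz_eL i j.
Proof.
case: i => [|i] // _ _ /= lt_par eq_l.
have [eY|neY] := eqVneq (Y i.+1 j) (Y i j); first by rewrite /gz_circ /= eY eqxx.
by move: lt_par; rewrite (next_entry_eq_left (elimN eqP neY) eq_l) ltxx.
Qed.

Lemma gz_eq_right i j : entry n i j -> (0 < i)%N -> gz_val i.-1 j < gz_val i.-1 j.+1 ->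
  gz_val i j = gz_val i.-1 j.+1 -> gz_circ i j -> gz_eR i j.
Proof.
case: i => [|i] // hij _ /= lt_par eq_r; rewrite /gz_circ /=.
have hc := entry_coord hij (ltn0Sn i).
have [//|nR] := boolP (gz_eR i.+1 j).
case/or3P => [/eqP eY|//|/eqP eY].
  by move: lt_par; rewrite -eq_r /= next_entry_eqL // ltxx.
by move: (Y_lt_gz_valR hc nR); rewrite /= -eY eq_r ltxx.
Qed.

Lemma gz_tie_connected i j : entry n i j -> (0 < i)%N ->
  edge_connected n gz_pattern (i.-1, j) (i.-1, j.+1) ->
  [/\ gz_circ i j, gz_eL i j & gz_eR i j].
Proof.
case: i => [|i] // hij _ /(edge_connected_eq (f := fun i j => Y i j)) /= eY_par.
have [g1 g2] := y_GZ (entry_coord hij (ltn0Sn i)).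
have [eL eR] : Y i.+1 j = Y i j /\ Y i.+1 j = Y i j.+1.
  suff: Y i j = Y i j.+1 by split; lra.
  by apply: eY_par => -[|i'] j' //= _ _; split=> /eqP.
by rewrite /gz_circ /gz_eL /gz_eR /= eL eqxx -eL eR eqxx.
Qed.

Lemma gz_tie_circ i j : entry n i j -> (0 < i)%N -> gz_val i.-1 j = gz_val i.-1 j.+1 ->
  gz_val i j = gz_val i.-1 j -> gz_circ i j -> gz_eL i j || gz_eR i j.
Proof.
case: i => [|i] // hij _ /= eq_par eq_l; rewrite /gz_circ /=.
have hc := entry_coord hij (ltn0Sn i).
have [_|nR] := eqVneq (Y i.+1 j) (Y i j.+1); first by rewrite orbT.
rewrite orbF; case/orP => [//|/eqP eY].
by move: (Y_lt_gz_valR hc nR); rewrite /= -eY eq_l eq_par ltxx.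
Qed.

Lemma gz_pattern_enhanced : enhanced n lam gz_pattern.
Proof.
split; first by split=> // i j hij hi; apply: gz_val_interlace; apply: entry_coord.
split; first by [].
split; first exact: gz_joined.
split; first exact: gz_square.
split; first exact: gz_top_tie.
split; first exact: gz_eq_left.
split; first exact: gz_eq_right.
split; first by move=> i j hij hi _ _; apply: gz_tie_connected.
exact: gz_tie_circ.
Qed.

Lemma gz_pattern_Chat : Chat n lam gz_pattern y.
Proof.
move=> [|i] j hc; first by move: hc; rewrite /coord; lia.
have [g1 g2] := y_GZ hc; rewrite /= /gz_circ /=.
split; first by move/eqP.
split; first by move/eqP.
split; first by move=> /negPf-> /negPf-> /= /eqP ->.
move=> nL nR; rewrite (negPf nL) (negPf nR) /= => nY.
by apply: next_entry_free; rewrite // lt_neqAle ?nR // eq_sym nL.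
Qed.

Lemma gz_pattern_cell : inCell n lam gz_pattern y.
Proof.
have C := gz_pattern_Chat; have Cy := affine_span_self n C.
split=> //; split=> //; split; first by split.
have : near n y (fun z => forall i j, coord n i j ->
    affine_span n (Chat n lam gz_pattern) z ->
    Yext n lam z i.-1 j <= Yext n lam z i j /\ Yext n lam z i j <= Yext n lam z i.-1 j.+1).
  apply: near_forall_coord => -[|i] j hc; first by move: hc; rewrite /coord; lia.
  have [g1 g2] := y_GZ hc.
  apply: near_impl (near_and
    (near_affine_span_le (S := Chat n lam gz_pattern) (coord_yposL hc) (coord_ypos hc) g1 _)
    (near_affine_span_le (S := Chat n lam gz_pattern) (coord_ypos hc) (coord_yposR hc) g2 _)).
  - by move=> z [h1 h2] zL; split; [apply: h1 | apply: h2].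
  - by move=> eY w /(_ _ _ hc) [eL _]; apply/esym/eL; rewrite /= eY eqxx.
  - by move=> eY w /(_ _ _ hc) [_ [eR _]]; apply: eR; rewrite /= eY eqxx.
case=> e e_gt0 He.
by exists e; split=> // z zL zy; split=> // i j hc; apply: He.
Qed.

End Construction.

Section FreeValue.
Variable R : realType.

(* What [Chat], condition (5) and interlacing say about the value [a] of an
   entry that is neither joined nor encircled, with parent values [al], [ar]. *)
Definition free_value (al ar a : int) (yv : R) : Prop :=
  [/\ yv < a%:~R, (2%:Z <= a - al -> (a - 1)%:~R < yv), (al < ar -> a != al),
      al <= a & a <= ar].

Lemma free_value_unique al ar a1 a2 yv :
  free_value al ar a1 yv -> free_value al ar a2 yv -> a1 = a2.
Proof.
wlog lt12 : a1 a2 / a1 < a2.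
  move=> W h1 h2; case: (ltgtP a1 a2) => [lt12|lt21|//]; first exact: W.
  exact/esym/(W _ _ lt21).
move=> [y1 _ n1 l1 _] [_ t2 _ _ u2]; exfalso.
have [two|one] := leP 2%:Z (a2 - al).
  have : (a1%:~R : R) <= (a2 - 1)%:~R by rewrite ler_int; lia.
  by have := t2 two; lra.
have eq_al : a1 = al by lia.
have lt_lr : al < ar by lia.
by move: (n1 lt_lr); rewrite eq_al eqxx.
Qed.

Lemma free_value_int_le al ar a b yv : free_value al ar a yv -> yv = b%:~R -> b <= al.
Proof.
move=> [lt_a two _ le_a _] eY; rewrite leNgt; apply/negP => lt_b.
have lt_ba : b < a by rewrite -(ltr_int R) -eY.
have [t|o] := leP 2%:Z (a - al); last lia.
by have := two t; rewrite eY ltr_int; lia.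
Qed.

End FreeValue.

Section Uniqueness.
Variables (R : realType) (n : nat) (lam : nat -> nat) (y : nat -> nat -> R).
Local Notation Y := (Yext n lam y).

(* The strict inequalities imposed by [Chat] on an entry with no edge up and no circle. *)
Definition free_ineqs (P : epattern) (z : nat -> nat -> R) i j : Prop :=
  (if (2%:Z <= pa P i j - pa P i.-1 j) then (pa P i j - 1)%:~R < Yext n lam z i j
   else Yext n lam z i.-1 j < Yext n lam z i j) /\
  (if pa P i.-1 j.+1 == pa P i j then Yext n lam z i j < Yext n lam z i.-1 j.+1
   else Yext n lam z i j < (pa P i j)%:~R).

Section Cell.
Variable Q : epattern.
Hypotheses (Q_enh : enhanced n lam Q) (y_cell : inCell n lam Q y).
Local Notation a := (pa Q).

Lemma Q_top j : entry n 0 j -> a 0 j = (lam (n.+1 - j)%N)%:Z.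
Proof. by case: Q_enh => -[+ _] _; apply. Qed.

Lemma Q_top_circ j : entry n 0 j -> circ Q 0 j.
Proof. by case: Q_enh => _ [+ _]; apply. Qed.

Lemma Q_interlace i j : coord n i j -> a i.-1 j <= a i j /\ a i j <= a i.-1 j.+1.
Proof.
move=> hc; case: Q_enh => -[_ +] _.
by apply; [exact: coord_entry | exact: coord_pos hc].
Qed.

Lemma Q_joined i j : coord n i j ->
  (eL Q i j -> a i j = a i.-1 j /\ circ Q i j) /\ (eR Q i j -> a i j = a i.-1 j.+1 /\ circ Q i j).
Proof.
move=> hc; case: Q_enh => _ [_ [+ _]].
by apply; [exact: coord_entry | exact: coord_pos hc].
Qed.

Lemma Q_top_tie j : entry n 0 j -> entry n 0 j.+1 -> a 0 j = a 0 j.+1 ->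
  [/\ circ Q 1 j, eL Q 1 j & eR Q 1 j].
Proof. by case: Q_enh => _ [_ [_ [_ [+ _]]]]; apply. Qed.

Lemma Q_eq_left i j : coord n i j -> a i.-1 j < a i.-1 j.+1 -> a i j = a i.-1 j ->
  circ Q i j /\ eL Q i j.
Proof.
move=> hc; case: Q_enh => _ [_ [_ [_ [_ [+ _]]]]].
by apply; [exact: coord_entry | exact: coord_pos hc].
Qed.

Lemma Q_eq_right i j : coord n i j -> a i.-1 j < a i.-1 j.+1 -> a i j = a i.-1 j.+1 ->
  circ Q i j -> eR Q i j.
Proof.
move=> hc; case: Q_enh => _ [_ [_ [_ [_ [_ [+ _]]]]]].
by apply; [exact: coord_entry | exact: coord_pos hc].
Qed.

Lemma Q_tie_connected i j : coord n i j -> a i.-1 j = a i.-1 j.+1 -> a i j = a i.-1 j ->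
  edge_connected n Q (i.-1, j) (i.-1, j.+1) -> [/\ circ Q i j, eL Q i j & eR Q i j].
Proof.
move=> hc; case: Q_enh => _ [_ [_ [_ [_ [_ [_ [+ _]]]]]]].
by apply; [exact: coord_entry | exact: coord_pos hc].
Qed.

Lemma Q_tie_circ i j : coord n i j -> a i.-1 j = a i.-1 j.+1 -> a i j = a i.-1 j ->
  circ Q i j -> eL Q i j || eR Q i j.
Proof.
move=> hc; case: Q_enh => _ [_ [_ [_ [_ [_ [_ [_ +]]]]]]].
by apply; [exact: coord_entry | exact: coord_pos hc].
Qed.

Lemma Q_Chat : Chat n lam Q y.
Proof. by case: y_cell. Qed.

Lemma y_inGZ : inGZ n lam y.
Proof. by case: y_cell => _ [_ [[]]]. Qed.

Lemma Q_circ_eq_parent i j : coord n i j -> circ Q i j ->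
  a i j = a i.-1 j \/ a i j = a i.-1 j.+1 -> eL Q i j || eR Q i j.
Proof.
move=> hc hci eq_par; have [g1 g2] := Q_interlace hc.
have [lt_par|ge_par] := ltP (a i.-1 j) (a i.-1 j.+1).
  case: eq_par => [eq_l|eq_r]; first by have [_ ->] := Q_eq_left hc lt_par eq_l.
  by rewrite (Q_eq_right hc lt_par eq_r hci) orbT.
have tie : a i.-1 j = a i.-1 j.+1 by apply/eqP; rewrite eq_le (le_trans g1 g2) ge_par.
have eq_l : a i j = a i.-1 j by case: eq_par => // ->; rewrite tie.
exact: Q_tie_circ hc tie eq_l hci.
Qed.

Lemma Y_le_Q i : forall j, entry n i j -> Y i j <= (a i j)%:~R.
Proof.
elim: i => [|i IH] j hj; first by rewrite Q_top // Yext_top.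
have hc := entry_coord hj (ltn0Sn i).
have [eqL [eqR [fixed free]]] := Q_Chat hc; have [jL jR] := Q_joined hc.
have [hL|nL] := boolP (eL Q i.+1 j).
  by rewrite eqL // (jL hL).1; apply: IH (coord_entryL hc).
have [hR|nR] := boolP (eR Q i.+1 j).
  by rewrite eqR // (jR hR).1; apply: IH (coord_entryR hc).
have [hci|nci] := boolP (circ Q i.+1 j); first by rewrite fixed.
have [_] := free nL nR nci; have := IH j.+1 (coord_entryR hc).
by case: eqP => [<-|_] /=; lra.
Qed.

Lemma Q_connected_eq u v : edge_connected n Q u v ->
  Y u.1 u.2 = Y v.1 v.2 /\ a u.1 u.2 = a v.1 v.2.
Proof.
move=> uv; split; apply: edge_connected_eq uv => i j hij hi; have hc := entry_coord hij hi.
- by have [eqL [eqR _]] := Q_Chat hc.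
- by have [jL jR] := Q_joined hc; split=> [/jL|/jR] [].
Qed.

Lemma Q_not_connected_fixed x i j : Y x.1 x.2 < (a x.1 x.2)%:~R ->
  Y i j = (a i j)%:~R -> ~ edge_connected n Q x (i, j).
Proof.
by move=> lt_x fix_ij /Q_connected_eq [/= eY ea]; move: lt_x; rewrite eY ea fix_ij ltxx.
Qed.

Definition shift (x : nat * nat) (d : R) (i j : nat) : R :=
  y i j + (if `[< edge_connected n Q x (i, j) >] then d else 0).

Lemma Yext_shift x d i j : Y x.1 x.2 < (a x.1 x.2)%:~R -> entry n i j ->
  Yext n lam (shift x d) i j = Y i j + (if `[< edge_connected n Q x (i, j) >] then d else 0).
Proof.
move=> lt_x; case: i => [|i] hij; last by [].
rewrite asboolF ?addr0 //; apply: Q_not_connected_fixed lt_x _.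
by rewrite Q_top // Yext_top.
Qed.

Lemma shift_Chat x d : Y x.1 x.2 < (a x.1 x.2)%:~R ->
  (forall i j, coord n i j -> ~~ eL Q i j -> ~~ eR Q i j -> ~~ circ Q i j ->
     free_ineqs Q (shift x d) i j) ->
  Chat n lam Q (shift x d).
Proof.
move=> lt_x free; rewrite /Chat /= => i j hc; have [eqL [eqR [fixed _]]] := Q_Chat hc.
have shift_adj k l : edge_adj n Q (i, j) (k, l) -> entry n k l -> Y i j = Y k l ->
    Yext n lam (shift x d) i j = Yext n lam (shift x d) k l.
  move=> ijkl hkl eY.
  rewrite (Yext_shift d lt_x (coord_entry hc)) (Yext_shift d lt_x hkl) eY.
  suff -> : `[< edge_connected n Q x (i, j) >] = `[< edge_connected n Q x (k, l) >] by [].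
  apply: asbool_equiv_eq; split=> conn; apply: rt_trans conn _; apply: rt_step => //.
  exact: edge_adj_sym.
split.
  move=> hL; apply: shift_adj (coord_entryL hc) (eqL hL).
  exact: edge_adjL (coord_entry hc) (coord_pos hc) hL.
split.
  move=> hR; apply: shift_adj (coord_entryR hc) (eqR hR).
  exact: edge_adjR (coord_entry hc) (coord_pos hc) hR.
split; last exact: free.
move=> nL nR hci; have fix_ij := fixed nL nR hci.
rewrite Yext_shift ?(coord_entry hc) // asboolF ?addr0 //.
exact: Q_not_connected_fixed lt_x fix_ij.
Qed.

Lemma near_free_ineqs : near n y (fun z => forall i j, coord n i j ->
  ~~ eL Q i j -> ~~ eR Q i j -> ~~ circ Q i j -> free_ineqs Q z i j).
Proof.
apply: near_forall_coord => i j hc.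
have [hL|nL] := boolP (eL Q i j); first by apply: nearT => z /negP.
have [hR|nR] := boolP (eR Q i j); first by apply: nearT => z _ /negP.
have [hci|nci] := boolP (circ Q i j); first by apply: nearT => z _ _ /negP.
have [lo up] := (Q_Chat hc).2.2.2 nL nR nci.
apply: near_impl (near_and (_ : near n y (fun z => _)) (_ : near n y (fun z => _))).
  by move=> z [lo_z up_z] _ _ _; split; [exact: lo_z | exact: up_z].
- move: lo; case: ifP => _ lo.
    exact: near_ltr_Yext (coord_ypos hc) lo.
  exact: near_Yext_lt (coord_yposL hc) (coord_ypos hc) lo.
- move: up; case: ifP => _ up.
    exact: near_Yext_lt (coord_ypos hc) (coord_yposR hc) up.
  exact: near_Yext_ltr (coord_ypos hc) up.
Qed.

Lemma shift_inGZ x : Y x.1 x.2 < (a x.1 x.2)%:~R ->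
  exists2 e : R, 0 < e & forall d, `|d| < e -> inGZ n lam (shift x d).
Proof.
move=> lt_x; case: y_cell => _ [_ [_ [e1 [e1_gt0 He1]]]].
have [e2 e2_gt0 He2] := near_free_ineqs.
exists (Num.min e1 e2) => [|d]; first by rewrite lt_min e1_gt0.
rewrite lt_min => /andP[d_e1 d_e2].
have close e : `|d| < e -> forall i j, coord n i j -> `|shift x d i j - y i j| < e.
  move=> d_e i j _; rewrite /shift [y i j + _]addrC addrK.
  by case: ifP => // _; rewrite normr0; apply: le_lt_trans d_e.
have C := shift_Chat lt_x (He2 _ (close _ d_e2)).
by have [] := He1 _ (affine_span_self n C) (close _ d_e1).
Qed.

(* If one of the two entries had [Y < a], shifting its component by a small
   amount would stay in GZ(lam) and break the order. *)
Lemma tie_fixed i1 j1 i2 j2 : entry n i1 j1 -> entry n i2 j2 ->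
  (forall z : nat -> nat -> R, inGZ n lam z -> Yext n lam z i1 j1 <= Yext n lam z i2 j2) ->
  Y i1 j1 = Y i2 j2 -> ~ edge_connected n Q (i1, j1) (i2, j2) ->
  Y i1 j1 = (a i1 j1)%:~R /\ Y i2 j2 = (a i2 j2)%:~R.
Proof.
move=> h1 h2 le12 eY nconn.
have half (e : R) : 0 < e -> `|e / 2| < e /\ `|- (e / 2)| < e.
  by move=> e_gt0; rewrite normrN gtr0_norm; lra.
split; apply/eqP; rewrite eq_le Y_le_Q //= leNgt; apply/negP => lt_a.
- have [e e_gt0 He] := shift_inGZ (x := (i1, j1)) lt_a.
  have := le12 _ (He _ (half e e_gt0).1).
  rewrite !Yext_shift // (asboolT (rt_refl _ _ _)) asboolF //; lra.
- have [e e_gt0 He] := shift_inGZ (x := (i2, j2)) lt_a.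
  have := le12 _ (He _ (half e e_gt0).2).
  rewrite !Yext_shift // (asboolT (rt_refl _ _ _)) asboolF; first lra.
  by move/edge_connected_sym.
Qed.

Lemma Q_left_tie i j : coord n i j -> Y i j = Y i.-1 j -> Y i j <> Y i.-1 j.+1 ->
  [/\ eL Q i j, ~~ eR Q i j, circ Q i j & a i j = a i.-1 j].
Proof.
move=> hc eYL neYR.
have [eqL [eqR [fixed free]]] := Q_Chat hc; have [jL _] := Q_joined hc.
have nR : ~~ eR Q i j by apply/negP => /eqR.
have [hL|nL] := boolP (eL Q i j); first by have [? ?] := jL hL.
exfalso; have [g1 _] := Q_interlace hc; have YL := Y_le_Q (coord_entryL hc).
have [hci|nci] := boolP (circ Q i j).
  have eq_a : a i j = a i.-1 j.
    by apply/eqP; rewrite eq_le g1 andbT -(ler_int R) -(fixed nL nR hci) eYL.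
  by move: (Q_circ_eq_parent hc hci (or_introl eq_a)); rewrite (negPf nL) (negPf nR).
have [lo _] := free nL nR nci; move: lo; case: ifP => [two lo|_]; last lra.
have : ((a i j - 1)%:~R : R) < (a i.-1 j)%:~R by lra.
by rewrite ltr_int; lia.
Qed.

Lemma Q_right_tie i j : coord n i j -> Y i j <> Y i.-1 j -> Y i j = Y i.-1 j.+1 ->
  [/\ eR Q i j, ~~ eL Q i j, circ Q i j & a i j = a i.-1 j.+1].
Proof.
move=> hc neYL eYR.
have [eqL [eqR [fixed free]]] := Q_Chat hc; have [_ jR] := Q_joined hc.
have nL : ~~ eL Q i j by apply/negP => /eqL.
have [hR|nR] := boolP (eR Q i j); first by have [? ?] := jR hR.
exfalso.
have ne_a : a i j <> a i.-1 j.+1.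
  move=> eq_a; have [hci|nci] := boolP (circ Q i j).
    by move: (Q_circ_eq_parent hc hci (or_intror eq_a)); rewrite (negPf nL) (negPf nR).
  by have [_ up] := free nL nR nci; move: up; rewrite eq_a eqxx; lra.
have [fix_ij fix_R] : Y i j = (a i j)%:~R /\ Y i.-1 j.+1 = (a i.-1 j.+1)%:~R.
  apply: tie_fixed (coord_entry hc) (coord_entryR hc) _ eYR _.
    by move=> z /(_ _ _ hc) [].
  by move=> /Q_connected_eq [_ /= /ne_a].
by apply: ne_a; apply/eqP; rewrite -(eqr_int R) -fix_ij -fix_R eYR.
Qed.

Lemma Q_tie_joined i j : coord n i j -> a i.-1 j = a i.-1 j.+1 ->
  edge_connected n Q (i.-1, j) (i.-1, j.+1) ->
  [/\ eL Q i j, eR Q i j, circ Q i j & a i j = a i.-1 j].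
Proof.
move=> hc tie conn; have [g1 g2] := Q_interlace hc.
have eq_a : a i j = a i.-1 j by apply/eqP; rewrite eq_le g1 andbT tie.
by have [] := Q_tie_connected hc tie eq_a conn.
Qed.

Lemma Q_row_tie k : forall m, entry n k m -> entry n k m.+1 -> Y k m = Y k m.+1 ->
  a k m = a k m.+1 /\ edge_connected n Q (k, m) (k, m.+1).
Proof.
elim: k => [|k IH] m h1 h2 eY.
  have eq_a : a 0 m = a 0 m.+1.
    by rewrite (Q_top h1) (Q_top h2); move/eqP: eY; rewrite !Yext_top eqr_nat => /eqP ->.
  have [_ hL hR] := Q_top_tie h1 h2 eq_a.
  have h1m : entry n 1 m by move: h1 h2; rewrite /entry; lia.
  split=> //; apply: (@rt_trans _ _ _ (1%N, m)).
    exact/edge_connected_sym/rt_step/(edge_adjL h1m).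
  exact/rt_step/(edge_adjR h1m).
have c1 := entry_coord h1 (ltn0Sn k); have c2 := entry_coord h2 (ltn0Sn k).
have [g1 g2] := y_inGZ c1; have [g3 g4] := y_inGZ c2; rewrite /= in g1 g2 g3 g4.
have eY1 : Y k m.+1 = Y k.+1 m by lra.
have eY2 : Y k.+1 m.+1 = Y k m.+1 by lra.
have [hR eq_r] : eR Q k.+1 m /\ a k.+1 m = a k m.+1.
  have [eYL|neYL] := eqVneq (Y k.+1 m) (Y k m).
    have [tie conn] := IH m (coord_entryL c1) (coord_entryR c1) (etrans (esym eYL) (esym eY1)).
    by have [_ ? _ ->] := Q_tie_joined c1 tie conn.
  by have [? _ _ ?] := Q_right_tie c1 (elimN eqP neYL) (esym eY1).
have [hL eq_l] : eL Q k.+1 m.+1 /\ a k.+1 m.+1 = a k m.+1.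
  have [eYR|neYR] := eqVneq (Y k.+1 m.+1) (Y k m.+2).
    have [tie conn] := IH m.+1 (coord_entryL c2) (coord_entryR c2) (etrans (esym eY2) eYR).
    by have [? _ _ ->] := Q_tie_joined c2 tie conn.
  by have [? _ _ ?] := Q_left_tie c2 eY2 (elimN eqP neYR).
split; first by rewrite eq_r eq_l.
apply: (@rt_trans _ _ _ (k, m.+1)); first exact/rt_step/(edge_adjR h1).
exact/edge_connected_sym/rt_step/(edge_adjL h2).
Qed.

Lemma Q_double_tie i j : coord n i j -> Y i j = Y i.-1 j -> Y i j = Y i.-1 j.+1 ->
  [/\ eL Q i j, eR Q i j, circ Q i j & a i j = a i.-1 j].
Proof.
move=> hc eYL eYR; rewrite eYL in eYR.
have [tie conn] := Q_row_tie (coord_entryL hc) (coord_entryR hc) eYR.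
exact: Q_tie_joined hc tie conn.
Qed.

Lemma Q_no_tie i j : coord n i j -> Y i j <> Y i.-1 j -> Y i j <> Y i.-1 j.+1 ->
  [/\ ~~ eL Q i j, ~~ eR Q i j,
      circ Q i j -> Y i j = (a i j)%:~R /\ a i.-1 j < a i j &
      ~~ circ Q i j -> free_value (a i.-1 j) (a i.-1 j.+1) (a i j) (Y i j)].
Proof.
move=> hc neYL neYR; have [eqL [eqR [fixed free]]] := Q_Chat hc.
have nL : ~~ eL Q i j by apply/negP => /eqL.
have nR : ~~ eR Q i j by apply/negP => /eqR.
have [g1 g2] := Q_interlace hc.
split=> // hci.
  split; first exact: fixed.
  rewrite lt_neqAle g1 andbT; apply/eqP => eq_a.
  by move: (Q_circ_eq_parent hc hci (or_introl (esym eq_a))); rewrite (negPf nL) (negPf nR).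
have [lo up] := free nL nR hci; split=> //.
- by move: up; case: eqP => [<-|_] // up; have := Y_le_Q (coord_entryR hc); lra.
- by move=> two; move: lo; rewrite two.
- move=> lt_par; apply/eqP => eq_a.
  by have [circ_ij _] := Q_eq_left hc lt_par eq_a; rewrite circ_ij in hci.
Qed.

End Cell.

Lemma cell_pattern_unique Q1 Q2 : enhanced n lam Q1 -> inCell n lam Q1 y ->
  enhanced n lam Q2 -> inCell n lam Q2 y -> same_pattern n Q1 Q2.
Proof.
move=> e1 c1 e2 c2 i; elim: i => [|i IH] j hij.
  by rewrite (Q_top e1 hij) (Q_top e2 hij) (Q_top_circ e1 hij) (Q_top_circ e2 hij).
have hc := entry_coord hij (ltn0Sn i).
have [eq_l _ _ _] := IH j (coord_entryL hc); have [eq_r _ _ _] := IH j.+1 (coord_entryR hc).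
have [eYL|neYL] := eqVneq (Y i.+1 j) (Y i j);
  have [eYR|neYR] := eqVneq (Y i.+1 j) (Y i j.+1).
- have [l1 r1 o1 v1] := Q_double_tie e1 c1 hc eYL eYR.
  have [l2 r2 o2 v2] := Q_double_tie e2 c2 hc eYL eYR.
  by split=> [|||_]; rewrite ?v1 ?v2 ?eq_l ?l1 ?l2 ?r1 ?r2 ?o1 ?o2.
- have [l1 r1 o1 v1] := Q_left_tie e1 c1 hc eYL (elimN eqP neYR).
  have [l2 r2 o2 v2] := Q_left_tie e2 c2 hc eYL (elimN eqP neYR).
  by split=> [|||_]; rewrite ?v1 ?v2 ?eq_l ?l1 ?l2 ?(negPf r1) ?(negPf r2) ?o1 ?o2.
- have [r1 l1 o1 v1] := Q_right_tie e1 c1 hc (elimN eqP neYL) eYR.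
  have [r2 l2 o2 v2] := Q_right_tie e2 c2 hc (elimN eqP neYL) eYR.
  by split=> [|||_]; rewrite ?v1 ?v2 ?eq_r ?(negPf l1) ?(negPf l2) ?r1 ?r2 ?o1 ?o2.
have [l1 r1 o1 f1] := Q_no_tie e1 c1 hc (elimN eqP neYL) (elimN eqP neYR).
have [l2 r2 o2 f2] := Q_no_tie e2 c2 hc (elimN eqP neYL) (elimN eqP neYR).
rewrite -eq_l -eq_r in o2 f2.
suff [-> ->] : pa Q1 i.+1 j = pa Q2 i.+1 j /\ circ Q1 i.+1 j = circ Q2 i.+1 j.
  by split=> // _; rewrite ?(negPf l1) ?(negPf l2) ?(negPf r1) ?(negPf r2).
case: (boolP (circ Q1 i.+1 j)) o1 f1 => [h1 o1 _|h1 _ f1];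
  case: (boolP (circ Q2 i.+1 j)) o2 f2 => [h2 o2 _|h2 _ f2].
- have [eY1 _] := o1 isT; have [eY2 _] := o2 isT.
  by split=> //; apply/eqP; rewrite -(eqr_int R) -eY1 -eY2.
- have [eY1 lt1] := o1 isT.
  by have := free_value_int_le (f2 isT) eY1; rewrite leNgt lt1.
- have [eY2 lt2] := o2 isT.
  by have := free_value_int_le (f1 isT) eY2; rewrite leNgt lt2.
- by split=> //; apply: free_value_unique (f1 isT) (f2 isT).
Qed.

End Uniqueness.

Theorem lemma5p1 (R : realType) (n : nat) (lam : nat -> nat)
  (Hlam : is_partition n lam) (y : nat -> nat -> R) :
  inGZ n lam y ->
  exists P : epattern,
    [/\ enhanced n lam P, inCell n lam P y &
        forall Q : epattern, enhanced n lam Q -> inCell n lam Q y -> same_pattern n Q P].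
Proof.
move=> y_GZ; have P_enh := gz_pattern_enhanced Hlam y_GZ.
have P_cell := gz_pattern_cell y_GZ.
exists (gz_pattern n lam y); split=> // Q Q_enh Q_cell.
exact: cell_pattern_unique Q_enh Q_cell P_enh P_cell.
Qed.
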